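(* Let $\mathcal H$ be a finite-dimensional Hilbert space, $L\in\mathbb N$, and $P_1,\dots,P_L$ orthogonal projections on $\mathcal H$ such that $[P_i,P_j]\ne0$ implies $|i-j|=1$ or $\{i,j\}=\{1,L\}$. Fix $1<n<L$, identify indices cyclically ($i\equiv i+L$), and set $H_L=\sum_{i=1}^LP_i$ and $H_{n,k}=\sum_{i=k}^{n+k-1}P_i$ for $k=1,\dots,L$. Assume $\ker H_L\ne\{0\}$. Then $$\operatorname{gap}(H_L)\ge\frac{n}{n-1}\Big(\min_{1\le k\le L}\operatorname{gap}(H_{n,k})-\frac1n\Big).$$
   Context: For a nonnegative self-adjoint operator $H$ on a finite-dimensional Hilbert space with nontrivial kernel, $\operatorname{gap}(H)=\inf\{\langle\psi,H\psi\rangle:\psi\in(\ker H)^\perp,\|\psi\|=1\}$. *)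

(* Hilbert space: C^d with C := R[i] (complex numbers over R : realType),
   vectors are column vectors 'cV[R[i]]_d, inner product <u,v> = (u^t* *m v) 0 0. *)
From HB Require Import structures.
From mathcomp Require Import all_boot all_order all_algebra.
From mathcomp Require Import sesquilinear.
From mathcomp Require Import complex.
From mathcomp Require Import all_classical all_reals.
From mathcomp Require Import ereal.
Set Implicit Arguments. Unset Strict Implicit. Unset Printing Implicit Defensive.
Import Order.TTheory GRing.Theory Num.Theory.
Local Open Scope ring_scope.
Local Open Scope sesquilinear_scope.
Local Open Scope classical_set_scope.

(* inner product <u, v> on C^d (antilinear in the first argument) *)
Definition inprod {R : rcfType} (d : nat) (u v : 'cV[R[i]]_d) : R[i] :=
  (u ^t* *m v) 0 0.

Definition in_ker {R : rcfType} (d : nat) (H : 'M[R[i]]_d) (psi : 'cV[R[i]]_d) : Prop :=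
  H *m psi = 0.

Definition in_ker_perp {R : rcfType} (d : nat) (H : 'M[R[i]]_d) (psi : 'cV[R[i]]_d) : Prop :=
  forall phi, in_ker H phi -> inprod phi psi = 0.

Definition orth_proj {R : rcfType} (d : nat) (P : 'M[R[i]]_d) : Prop :=
  P ^t* = P /\ P *m P = P.

(* gap(H) = inf { <psi, H psi> : psi in (ker H)^perp, ||psi|| = 1 }, taken in the
   extended reals (inf of the empty set is +oo).  For self-adjoint H the number
   <psi, H psi> is real; we take its real part. *)
Definition gap {R : realType} (d : nat) (H : 'M[R[i]]_d) : \bar R :=
  ereal_inf [set ((complex.Re (inprod psi (H *m psi)))%:E) | psi in
     [set psi : 'cV[R[i]]_d | in_ker_perp H psi /\ inprod psi psi = 1]].

(* cyclic indexing: cyc P i = P_(i mod L) *)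
Definition cyc {T : nmodType} (L : nat) (P : 'I_L -> T) (i : nat) : T :=
  \sum_(j < L | nat_of_ord j == (i %% L)%N) P j.

(* H_{n,k} = sum_{i=k}^{n+k-1} P_i (indices 0-based, cyclic) *)
Definition Hnk {T : nmodType} (L : nat) (P : 'I_L -> T) (n k : nat) : T :=
  \sum_(m < n) cyc P (k + m).

From HB Require Import structures.
From mathcomp Require Import all_boot all_order all_algebra.
From mathcomp Require Import sesquilinear complex spectral.
From mathcomp Require Import all_classical all_reals ereal.
From mathcomp Require Import zify ring.
Import Order.TTheory GRing.Theory Num.Theory.
Set Implicit Arguments. Unset Strict Implicit. Unset Printing Implicit Defensive.

(* For positive semidefinite H, gap H >= g iff g H <= H^2 in the Loewner order,
   as one sees on an orthonormal eigenbasis of H.  Let g bound every gap(H_{n,k}).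
   Each P_a lies in exactly n of the windows {k, ..., k + n - 1}, so summing
   g H_{n,k} <= H_{n,k}^2 over k gives g n H_L <= sum_k H_{n,k}^2
   = sum_{a,b} c_{ab} P_a P_b, where c_{ab} counts the windows containing a and b.
   Now c_{aa} = n, and c_{ab} <= n - 1 for a <> b, with equality for neighbours;
   non-neighbours commute, and then P_a P_b >= 0.  Hence
   sum_k H_{n,k}^2 <= (n - 1) H_L^2 + H_L, so (g n - 1)/(n - 1) H_L <= H_L^2,
   i.e. gap H_L >= n/(n - 1) (g - 1/n). *)

Section Windows.
Variables L n : nat.
Hypothesis n_gt0 : 0 < n.
Hypothesis n_lt_L : n < L.

Let L_gt0 : 0 < L. Proof. exact: leq_ltn_trans (leq0n n) n_lt_L. Qed.

Definition ord_mod (x : nat) : 'I_L := Ordinal (ltn_pmod x L_gt0).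

Definition offset (k x : 'I_L) : nat := if k <= x then x - k else x + L - k.

(* [window k] is the support {k, ..., k + n - 1} (mod L) of H_{n,k}; [windows_at x]
   collects the windows containing x. *)
Definition window (k : 'I_L) := [set x | offset k x < n].

Definition windows_at (x : 'I_L) := [set k | offset k x < n].

Lemma ord_modP x : x < L + L ->
  x < L /\ ord_mod x = x :> nat \/ L <= x /\ ord_mod x = x - L :> nat.
Proof.
move=> x_lt; case: (ltnP x L) => x_L; [left | right]; split => //=.
  exact: modn_small.
by rewrite -{1}(subnK x_L) modnDr modn_small //; lia.
Qed.

Lemma offsetP (k x : 'I_L) :
  k <= x /\ offset k x = x - k \/ x < k /\ offset k x = x + L - k.
Proof. by rewrite /offset; case: leqP; [left | right]. Qed.

Lemma window_image k : window k = [set ord_mod (k + m) | m : 'I_n].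
Proof.
apply/setP => x; rewrite inE; apply/idP/imsetP.
  move=> x_in; exists (Ordinal x_in) => //; apply: ord_inj.
  change (x = ord_mod (k + offset k x) :> nat).
  move: (ltn_ord k) (ltn_ord x) (offsetP k x) (@ord_modP (k + offset k x)); lia.
case=> m _ ->.
move: (ltn_ord k) (ltn_ord m) (@ord_modP (k + m)) (offsetP k (ord_mod (k + m))); lia.
Qed.

Lemma ord_mod_addn_inj (k : 'I_L) :
  {in 'I_n &, injective (fun m : 'I_n => ord_mod (k + m))}.
Proof.
move=> m1 m2 _ _ /(congr1 (@nat_of_ord L)).
move: (ltn_ord k) (ltn_ord m1) (ltn_ord m2) (@ord_modP (k + m1)) (@ord_modP (k + m2)).
by move=> *; apply: ord_inj; lia.
Qed.

Lemma card_window k : #|window k| = n.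
Proof. by rewrite window_image card_in_imset ?card_ord //; exact: ord_mod_addn_inj. Qed.

Lemma big_window (V : nmodType) (k : 'I_L) (F : 'I_L -> V) :
  (\sum_(m < n) F (ord_mod (k + m)) = \sum_(x in window k) F x)%R.
Proof. by rewrite window_image big_imset //; exact: ord_mod_addn_inj. Qed.

Lemma windows_atE a : windows_at a = window (ord_mod (a + L + 1 - n)).
Proof.
apply/setP => k; rewrite !inE.
move: (ltn_ord a) (ltn_ord k) (@ord_modP (a + L + 1 - n)).
move: (offsetP k a) (offsetP (ord_mod (a + L + 1 - n)) k) => *; apply/idP/idP; lia.
Qed.

Lemma card_windows_at a : #|windows_at a| = n.
Proof. by rewrite windows_atE card_window. Qed.

Lemma card_windows_atI_lt a b : a != b -> #|windows_at a :&: windows_at b| < n.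
Proof.
move=> /eqP a_neq_b; rewrite -(card_windows_at a); apply/proper_card/properP.
split; first exact: subsetIl.
have a_neq_b' : a <> b :> nat by move=> /ord_inj.
move: (ltn_ord a) (ltn_ord b) (offsetP a b) => *.
have [b_far | b_near] := ltnP (offset a b + n) L.
  exists (ord_mod (a + L + 1 - n)); rewrite !inE;
  move: (@ord_modP (a + L + 1 - n)) (offsetP (ord_mod (a + L + 1 - n)) a);
  move: (offsetP (ord_mod (a + L + 1 - n)) b); lia.
exists (ord_mod b.+1); rewrite !inE;
move: (@ord_modP b.+1) (offsetP (ord_mod b.+1) a) (offsetP (ord_mod b.+1) b); lia.
Qed.

Lemma windows_at_succI a :
  windows_at a :&: windows_at (ord_mod a.+1) = windows_at a :\ ord_mod (a + L + 1 - n).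
Proof.
apply/setP => k; rewrite !inE -(inj_eq (@ord_inj L)).
move: (ltn_ord a) (ltn_ord k) (@ord_modP a.+1) (@ord_modP (a + L + 1 - n)).
move: (offsetP k a) (offsetP k (ord_mod a.+1)) => *; apply/idP/idP; lia.
Qed.

Lemma card_windows_at_succI a :
  #|windows_at a :&: windows_at (ord_mod a.+1)| = n.-1.
Proof.
have s_in : ord_mod (a + L + 1 - n) \in windows_at a.
  rewrite inE; move: (ltn_ord a) (@ord_modP (a + L + 1 - n)).
  by move: (offsetP (ord_mod (a + L + 1 - n)) a); lia.
move: (cardsD1 (ord_mod (a + L + 1 - n)) (windows_at a)).
by rewrite windows_at_succI s_in card_windows_at; lia.
Qed.

Lemma card_windows_at_neighbourI (a b : 'I_L) :
  [|| a.+1 == b :> nat, b.+1 == a :> nat,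
      (a == 0 :> nat) && (b == L.-1 :> nat) |
      (b == 0 :> nat) && (a == L.-1 :> nat)] ->
  #|windows_at a :&: windows_at b| = n.-1.
Proof.
have [-> _ | b_succ] := eqVneq b (ord_mod a.+1); first exact: card_windows_at_succI.
have [-> _ | a_succ] := eqVneq a (ord_mod b.+1).
  by rewrite finset.setIC; exact: card_windows_at_succI.
move: b_succ a_succ; rewrite -!(inj_eq (@ord_inj L)).
by move: (ltn_ord a) (ltn_ord b) (@ord_modP a.+1) (@ord_modP b.+1); lia.
Qed.

Lemma mem_windows_at k x : (k \in windows_at x) = (x \in window k).
Proof. by rewrite !inE. Qed.

Lemma sum_windows (V : nmodType) (F : 'I_L -> V) :
  (\sum_(k < L) \sum_(x in window k) F x = (\sum_(x < L) F x) *+ n)%R.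
Proof.
under eq_bigr do rewrite big_mkcond.
rewrite exchange_big -sumrMnl; apply: eq_bigr => x _.
rewrite -(card_windows_at x) -sumr_const [RHS]big_mkcond.
by apply: eq_bigr => k _; rewrite mem_windows_at.
Qed.

Lemma sum_window_pairs (V : nmodType) (F : 'I_L -> 'I_L -> V) :
  (\sum_(k < L) \sum_(a in window k) \sum_(b in window k) F a b
   = \sum_(a < L) \sum_(b < L) F a b *+ #|windows_at a :&: windows_at b|)%R.
Proof.
transitivity (\sum_(k < L) \sum_(a < L) \sum_(b < L)
    (if k \in windows_at a :&: windows_at b then F a b else 0))%R.
  apply: eq_bigr => k _; rewrite big_mkcond; apply: eq_bigr => a _.
  case: ifPn => a_in; last first.
    by rewrite big1 // => b _; rewrite finset.in_setI mem_windows_at (negbTE a_in).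
  rewrite big_mkcond; apply: eq_bigr => b _.
  by rewrite finset.in_setI !mem_windows_at a_in.
rewrite exchange_big; apply: eq_bigr => a _; rewrite exchange_big.
by apply: eq_bigr => b _; rewrite -big_mkcond sumr_const.
Qed.

End Windows.

Local Open Scope ring_scope.
Local Open Scope sesquilinear_scope.

Section QuadraticForm.
Variable R : rcfType.
Local Notation C := R[i].

Definition qform d (A : 'M[C]_d) (v : 'cV[C]_d) : C := inprod v (A *m v).

Lemma trmxC_mul m n p (A : 'M[C]_(m, n)) (B : 'M[C]_(n, p)) :
  (A *m B)^t* = B^t* *m A^t*.
Proof. by rewrite trmx_mul map_mxM. Qed.

Lemma trmxC_sum d (I : finType) (p : pred I) (F : I -> 'M[C]_d) :
  (\sum_(i | p i) F i)^t* = \sum_(i | p i) (F i)^t*.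
Proof. by rewrite raddf_sum raddf_sum. Qed.

Lemma inprod_ge0 d (v : 'cV[C]_d) : 0 <= inprod v v.
Proof.
rewrite /inprod mxE; apply: sumr_ge0 => i _; rewrite !mxE mulrC.
exact: mul_conjC_ge0.
Qed.

Lemma qform_sum d (I : finType) (p : pred I) (F : I -> 'M[C]_d) v :
  qform (\sum_(i | p i) F i) v = \sum_(i | p i) qform (F i) v.
Proof. by rewrite /qform /inprod mulmx_suml mulmx_sumr summxE. Qed.

Lemma qformMn d (A : 'M[C]_d) v k : qform (A *+ k) v = qform A v *+ k.
Proof. by rewrite -(card_ord k) -!sumr_const qform_sum. Qed.

Lemma qform_mulmx_sum d (I J : finType) (p : pred I) (q : pred J)
    (F : I -> 'M[C]_d) (G : J -> 'M[C]_d) v :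
  qform ((\sum_(i | p i) F i) *m (\sum_(j | q j) G j)) v =
  \sum_(i | p i) \sum_(j | q j) qform (F i *m G j) v.
Proof.
rewrite mulmx_suml qform_sum; apply: eq_bigr => i _.
by rewrite mulmx_sumr qform_sum.
Qed.

Lemma qform_trmxCM_ge0 d (X : 'M[C]_d) v : 0 <= qform (X^t* *m X) v.
Proof. by rewrite /qform /inprod !mulmxA -trmxC_mul -mulmxA; exact: inprod_ge0. Qed.

Lemma qform_proj_ge0 d (P : 'M[C]_d) v : orth_proj P -> 0 <= qform P v.
Proof. by case=> P_herm P_idem; rewrite -P_idem -{1}P_herm qform_trmxCM_ge0. Qed.

Lemma qform_projM_ge0 d (P Q : 'M[C]_d) v : orth_proj P -> orth_proj Q ->
  P *m Q = Q *m P -> 0 <= qform (P *m Q) v.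
Proof.
move=> [P_herm P_idem] [Q_herm Q_idem] PQ.
suff -> : P *m Q = (Q *m P)^t* *m (Q *m P) by exact: qform_trmxCM_ge0.
by rewrite trmxC_mul P_herm Q_herm -mulmxA (mulmxA Q) Q_idem -PQ mulmxA P_idem.
Qed.

Section SumProj.
Variables (d : nat) (I : finType) (p : pred I) (P : I -> 'M[C]_d).
Hypothesis P_proj : forall i, orth_proj (P i).

Lemma sum_proj_herm : (\sum_(i | p i) P i)^t* = \sum_(i | p i) P i.
Proof. by rewrite trmxC_sum; apply: eq_bigr => i _; case: (P_proj i). Qed.

Lemma sum_proj_psd v : 0 <= qform (\sum_(i | p i) P i) v.
Proof. by rewrite qform_sum; apply: sumr_ge0 => i _; exact: qform_proj_ge0. Qed.

End SumProj.
End QuadraticForm.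

Section SpectralGap.
Variable R : realType.
Local Notation C := R[i].
Variables (d : nat) (H : 'M[C]_d).
Hypothesis H_herm : H^t* = H.
Hypothesis H_psd : forall v, 0 <= qform H v.

Let U := spectralmx H.
Let D := spectral_diag H.

Let UUt : U *m U^t* = 1%:M.
Proof. exact/unitarymxP/spectral_unitarymx. Qed.

Let UtU : U^t* *m U = 1%:M.
Proof. exact/mulmx1C/UUt. Qed.

Lemma herm_spectral_decomp : H = U^t* *m diag_mx D *m U.
Proof.
have /orthomx_spectralP : H \is normalmx by apply/normalmxP; rewrite H_herm.
by rewrite invmx_unitary ?spectral_unitarymx.
Qed.

Lemma herm_sqr_spectral_decomp : H *m H = U^t* *m diag_mx (\row_j D 0 j ^+ 2) *m U.
Proof.
rewrite herm_spectral_decomp -!mulmxA (mulmxA U) UUt mul1mx.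
by rewrite (mulmxA (diag_mx D)) mulmx_diag.
Qed.

Lemma qform_spectral (E : 'rV[C]_d) v :
  qform (U^t* *m diag_mx E *m U) v = \sum_i E 0 i * `|(U *m v) i 0| ^+ 2.
Proof.
rewrite /qform /inprod !mulmxA -trmxC_mul -!mulmxA mulmxA mul_mx_diag mxE.
by apply: eq_bigr => i _; rewrite !mxE normCK; ring.
Qed.

Definition eigvec (i : 'I_d) : 'cV[C]_d := U^t* *m delta_mx i 0.

Lemma mul_spectral_eigvec i : U *m eigvec i = delta_mx i 0.
Proof. by rewrite /eigvec mulmxA UUt mul1mx. Qed.

Lemma inprod_eigvec i v : inprod (eigvec i) v = (U *m v) i 0.
Proof.
rewrite /inprod /eigvec trmxC_mul trmxCK -mulmxA mxE (bigD1 i) //= big1 ?addr0.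
  by rewrite !mxE !eqxx conjC1 mul1r.
by move=> j /negbTE ji; rewrite !mxE ji conjC0 mul0r.
Qed.

Lemma eigvec_unit i : inprod (eigvec i) (eigvec i) = 1.
Proof. by rewrite inprod_eigvec mul_spectral_eigvec !mxE !eqxx. Qed.

Lemma eigvecP i : H *m eigvec i = D 0 i *: eigvec i.
Proof.
rewrite {1}herm_spectral_decomp -!mulmxA mul_spectral_eigvec mul_diag_mx.
rewrite /eigvec scalemxAr; congr (_ *m _).
by apply/matrixP => a b; rewrite !mxE; case: eqP => [->|]; rewrite ?mulr0.
Qed.

Lemma qform_spectral_eigvec (E : 'rV[C]_d) i :
  qform (U^t* *m diag_mx E *m U) (eigvec i) = E 0 i.
Proof.
rewrite qform_spectral mul_spectral_eigvec (bigD1 i) //= big1 ?addr0.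
  by rewrite !mxE !eqxx normr1 expr1n mulr1.
by move=> j /negbTE ji; rewrite !mxE ji normr0 expr0n mulr0.
Qed.

Lemma spectral_diag_ge0 i : 0 <= D 0 i.
Proof. by rewrite -(qform_spectral_eigvec D i) -herm_spectral_decomp; exact: H_psd. Qed.

Lemma eigvec_ker_perp i : D 0 i != 0 -> in_ker_perp H (eigvec i).
Proof.
move=> Di_neq0 phi Hphi.
have -> : eigvec i = (D 0 i)^-1 *: (H *m eigvec i).
  by rewrite eigvecP scalerA mulVf // scale1r.
rewrite /inprod -scalemxAr mulmxA -{1}H_herm -trmxC_mul Hphi.
by rewrite trmx0 map_mx0 mul0mx scaler0 mxE.
Qed.

Lemma gap_le_eigenvalue i : D 0 i != 0 -> (gap H <= (complex.Re (D 0 i))%:E)%E.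
Proof.
move=> Di_neq0; apply: ereal_inf_lbound.
exists (eigvec i); first by split; [exact: eigvec_ker_perp | exact: eigvec_unit].
by rewrite eigvecP /inprod -scalemxAr mxE -/(inprod _ _) eigvec_unit mulr1.
Qed.

Lemma gap_ge_loewnerP (g : R) :
  (g%:E <= gap H)%E <-> forall v, (g%:C)%C * qform H v <= qform (H *m H) v.
Proof.
split=> [g_le_gap v | g_loewner].
  rewrite {1}herm_spectral_decomp herm_sqr_spectral_decomp !qform_spectral.
  rewrite mulr_sumr; apply: ler_sum => i _; rewrite [(\row_j _) 0 i]mxE mulrA.
  apply: ler_wpM2r; first exact: exprn_ge0.
  have [->|Di_neq0] := eqVneq (D 0 i) 0; first by rewrite mulr0 expr2 mulr0.
  have g_le_Di : g <= complex.Re (D 0 i).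
    by rewrite -lee_fin; exact: le_trans g_le_gap (gap_le_eigenvalue Di_neq0).
  rewrite expr2 ler_wpM2r ?spectral_diag_ge0 //.
  by rewrite -[D 0 i]RRe_real ?lecR // ger0_real ?spectral_diag_ge0.
apply/ereal_infP => _ [psi [psi_perp psi_unit] <-]; rewrite lee_fin.
suff : (g%:C)%C <= qform H psi by rewrite lecE => /andP[_].
have psi_weights : \sum_i `|(U *m psi) i 0| ^+ 2 = 1.
  have := qform_spectral (const_mx 1) psi.
  rewrite diag_const_mx mulmx1 UtU /qform mul1mx psi_unit => ->.
  by apply: eq_bigr => i _; rewrite [const_mx _ _ _]mxE mul1r.
rewrite -[(g%:C)%C]mulr1 -psi_weights herm_spectral_decomp qform_spectral mulr_sumr.
apply: ler_sum => i _.
have [Di0|Di_neq0] := eqVneq (D 0 i) 0.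
  have -> : (U *m psi) i 0 = 0.
    by rewrite -inprod_eigvec; apply: psi_perp; rewrite /in_ker eigvecP Di0 scale0r.
  by rewrite normr0 expr2 !mulr0.
apply: ler_wpM2r; first exact: exprn_ge0.
have Di_gt0 : 0 < D 0 i by rewrite lt_def Di_neq0 spectral_diag_ge0.
have := g_loewner (eigvec i).
rewrite {1}herm_spectral_decomp herm_sqr_spectral_decomp !qform_spectral_eigvec mxE.
by rewrite expr2 ler_pM2r.
Qed.

End SpectralGap.

Lemma ereal_affine_le (R : realType) (a c : R) (m y : \bar R) : 0 < a ->
  (forall G : R, (G%:E <= m)%E -> ((a * (G - c))%:E <= y)%E) ->
  (a%:E * (m - c%:E) <= y)%E.
Proof.
move=> a_gt0 y_ge; case: m y_ge => [r | | ] y_ge.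
- by rewrite -EFinB -EFinM; exact: y_ge.
- rewrite addye // gt0_muley ?lte_fin // (eq_infty (x := y)) // => r.
  have := y_ge (r / a + c) (leey _); congr (_ <= _)%E; congr _%:E; field.
  by rewrite gt_eqF.
- by rewrite addNye gt0_muleNy ?lte_fin ?leNye.
Qed.

Section KnabeBound.
Variable R : realType.
Local Notation C := R[i].
Variables (d L n : nat) (P : 'I_L -> 'M[C]_d).
Hypothesis P_proj : forall j, orth_proj (P j).
Hypothesis P_comm : forall a b : 'I_L, P a *m P b != P b *m P a ->
  [|| a.+1 == b :> nat, b.+1 == a :> nat,
      (a == 0 :> nat) && (b == L.-1 :> nat) |
      (b == 0 :> nat) && (a == L.-1 :> nat)].
Hypothesis n_gt1 : (1 < n)%N.
Hypothesis n_lt_L : (n < L)%N.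

Let n_gt0 : (0 < n)%N. Proof. exact: ltnW. Qed.
Local Notation HL := (\sum_(j < L) P j).

Lemma Hnk_window (k : 'I_L) : Hnk P n k = \sum_(x in window n k) P x.
Proof.
rewrite /Hnk -(big_window n_gt0 n_lt_L); apply: eq_bigr => m _.
by rewrite /cyc (big_pred1 (ord_mod n_lt_L (k + m))).
Qed.

Lemma sum_Hnk : \sum_(k < L) Hnk P n k = HL *+ n.
Proof.
rewrite -(sum_windows n_gt0 n_lt_L); apply: eq_bigr => k _; exact: Hnk_window.
Qed.

Lemma qform_window_pair_le a b v : a != b ->
  qform (P a *m P b) v *+ #|windows_at n a :&: windows_at n b|
  <= qform (P a *m P b) v *+ n.-1.
Proof.
move=> a_neq_b.
have [Pab_comm | /P_comm ab_adj] := eqVneq (P a *m P b) (P b *m P a).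
  apply: ler_wpMn2l; first exact: qform_projM_ge0.
  by move: (card_windows_atI_lt n_gt0 n_lt_L a_neq_b); lia.
by rewrite (card_windows_at_neighbourI n_gt0 n_lt_L ab_adj).
Qed.

Lemma qform_window_diag a v :
  qform (P a *m P a) v *+ #|windows_at n a :&: windows_at n a|
  = qform (P a *m P a) v *+ n.-1 + qform (P a) v.
Proof.
case: (P_proj a) => _ ->.
by rewrite finset.setIid (card_windows_at n_gt0 n_lt_L) -mulrSr prednK.
Qed.

Lemma sum_Hnk_sqr_le v :
  qform (\sum_(k < L) Hnk P n k *m Hnk P n k) v
  <= qform (HL *m HL) v *+ n.-1 + qform HL v.
Proof.
rewrite qform_sum; under eq_bigr do rewrite Hnk_window qform_mulmx_sum.
rewrite (sum_window_pairs n) qform_mulmx_sum qform_sum -sumrMnl -big_split.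
apply: ler_sum => a _; rewrite -sumrMnl (bigD1 a) //= [X in _ <= X + _](bigD1 a) //=.
rewrite (qform_window_diag a v) [X in _ <= X]addrAC lerD2l.
by apply: ler_sum => b b_neq_a; apply: qform_window_pair_le; rewrite eq_sym.
Qed.

Lemma gap_sum_proj_ge (G : R) : (forall k : 'I_L, (G%:E <= gap (Hnk P n k))%E) ->
  (((n%:R * G - 1) / (n%:R - 1))%:E <= gap HL)%E.
Proof.
move=> G_le_gap.
apply/gap_ge_loewnerP; [exact: sum_proj_herm | exact: sum_proj_psd | move=> v].
have sum_loewner :
    (G%:C)%C * (qform HL v *+ n) <= qform (HL *m HL) v *+ n.-1 + qform HL v.
  rewrite -qformMn -sum_Hnk; apply: le_trans (sum_Hnk_sqr_le v).
  rewrite !qform_sum mulr_sumr; apply: ler_sum => k _; move: (G_le_gap k).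
  rewrite Hnk_window => /gap_ge_loewnerP; apply;
    [exact: sum_proj_herm | exact: sum_proj_psd].
have n1_gt0 : 0 < n%:R - 1 :> C by rewrite subr_gt0 ltr1n.
rewrite rmorphM fmorphV !rmorphB rmorphM !rmorph_nat rmorph1 mulrAC ler_pdivrMr //.
have -> : n%:R - 1 = n.-1%:R :> C by rewrite -[in LHS](prednK n_gt0) -natr1 addrK.
rewrite mulrBl mul1r lerBlDr mulrAC mulr_natl mulr_natr mulrC.
exact: sum_loewner.
Qed.
End KnabeBound.

Close Scope sesquilinear_scope.
Unset Implicit Arguments.

Theorem theorem3p10 (R : realType) (d L n : nat) (P : 'I_L -> 'M[R[i]]_d)
  (hP : forall j, orth_proj (P j))
  (hcomm : forall a b : 'I_L, P a *m P b != P b *m P a ->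
     [|| (a.+1 == b :> nat), (b.+1 == a :> nat),
         ((a == 0 :> nat) && (b == L.-1 :> nat)) |
         ((b == 0 :> nat) && (a == L.-1 :> nat))])
  (hn1 : (1 < n)%N) (hnL : (n < L)%N)
  (hker : exists psi : 'cV[R[i]]_d, psi != 0 /\ (\sum_(j < L) P j) *m psi = 0) :
  ((n%:R / (n%:R - 1))%:E *
     (\big[Order.min/+oo%E]_(k < L) gap (Hnk P n k) - (n%:R^-1)%:E)
   <= gap (\sum_(j < L) P j))%E.
Proof.
(* [hker] is unused: the bound holds even when H_L is injective. *)
have n1_gt0 : 0 < n%:R - 1 :> R by rewrite subr_gt0 ltr1n.
apply: ereal_affine_le => [|G G_le_min]; first by rewrite divr_gt0 ?ltr0n 1?ltnW.
have -> : n%:R / (n%:R - 1) * (G - n%:R^-1) = (n%:R * G - 1) / (n%:R - 1).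
  by field; rewrite lt0r_neq0 //= pnatr_eq0 -lt0n (ltnW hn1).
apply: (gap_sum_proj_ge hP hcomm hn1 hnL) => k.
exact: le_trans G_le_min (bigmin_le _ _ _).
Qed.
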